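(* Assume $z>w>x>y$, $w+x>z+y$, $w>0$, $z>0$, that $G$ is connected, that $\boldsymbol\psi>\mathbf 0$ and $\boldsymbol\eta\in[0,1]^n$ are time-invariant, and that each $\lambda_i(t)>0$ is increasing in $t$ with $\lim_{t\to\infty}\lambda_i(t)=\infty$. Then for every initial condition $\mathbf q(0)\in\mathbb R^n$ there exist a vector $\underline{\boldsymbol\lambda}>\mathbf 0$ and a number $\underline T>0$ such that if $\lambda_i(t)<\underline\lambda_i$ for all $i$ and all $t<\underline T$, then all players favour the risk-dominant action $D$ as $t\to\infty$ (i.e., $q_i(t)>0$ for all $i$ and all sufficiently large $t$).
   Context: There are $n$ agents on an undirected simple graph with symmetric adjacency matrix $G\in\{0,1\}^{n\times n}$, $G_{ii}=0$; $N_i=\{j:G_{ij}=1\}$. Actions are $C$ and $D$. The stage payoff to an agent playing the row action against a neighbour playing the column action is $u(C,C)=z$, $u(C,D)=y$, $u(D,C)=x$, $u(D,D)=w$. The state is $\mathbf q(t)\in\mathbb R^n$ ($q_i$ = attraction of $D$ minus attraction of $C$ for agent $i$), $p_i(t)=1/(1+e^{-\lambda_i(t) q_i(t)})$, and the (non-autonomous) dynamics are $$\dot q_i=-\psi_i q_i+\big(p_i+\eta_i(1-p_i)\big)\sum_{j\in N_i}\big(p_jw+(1-p_j)x\big)-\big(1-p_i+\eta_ip_i\big)\sum_{j\in N_i}\big(p_jy+(1-p_j)z\big).$$ *)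

From Stdlib Require Import Reals Lra Relations.
From Coquelicot Require Import Coquelicot.
Open Scope R_scope.

(* Agents are indexed by nat, with only indices i < n meaningful. *)

Fixpoint sumR (n : nat) (f : nat -> R) : R :=
  match n with
  | O => 0
  | S m => sumR m f + f m
  end.

Definition simple_graph (n : nat) (G : nat -> nat -> bool) : Prop :=
  (forall i j, (i < n)%nat -> (j < n)%nat -> G i j = G j i) /\
  (forall i, (i < n)%nat -> G i i = false).

Definition edge (n : nat) (G : nat -> nat -> bool) (a b : nat) : Prop :=
  (a < n)%nat /\ (b < n)%nat /\ G a b = true.

Definition connected (n : nat) (G : nat -> nat -> bool) : Prop :=
  forall i j, (i < n)%nat -> (j < n)%nat -> clos_refl_trans nat (edge n G) i j.

Definition nbsum (n : nat) (G : nat -> nat -> bool) (i : nat) (f : nat -> R) : R :=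
  sumR n (fun j => if G i j then f j else 0).

(* logit choice probability of D *)
Definition prob (lam qi : R) : R := 1 / (1 + exp (- (lam * qi))).

Definition rhs (n : nat) (G : nat -> nat -> bool) (x y z w : R)
  (psi eta : nat -> R) (lam : nat -> R -> R) (t : R) (q : nat -> R) (i : nat) : R :=
  let p := fun j => prob (lam j t) (q j) in
  - psi i * q i
  + (p i + eta i * (1 - p i)) * nbsum n G i (fun j => p j * w + (1 - p j) * x)
  - (1 - p i + eta i * p i) * nbsum n G i (fun j => p j * y + (1 - p j) * z).

Definition is_solution (n : nat) (G : nat -> nat -> bool) (x y z w : R)
  (psi eta : nat -> R) (lam : nat -> R -> R) (q0 : nat -> R) (q : R -> nat -> R) : Prop :=
  (forall i, (i < n)%nat -> q 0 i = q0 i) /\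
  (forall i, (i < n)%nat ->
     filterlim (fun s => q s i) (at_right 0) (locally (q0 i))) /\
  (forall i t, (i < n)%nat -> 0 < t ->
     is_derive (fun s => q s i) t (rhs n G x y z w psi eta lam t (q t) i)).

(* While lambda is small, every choice probability stays close to 1/2, and at
   p = r = 1/2 each neighbour contributes (1 + eta)(w + x - y - z)/4 > 0 to the
   drift of q_i (risk dominance).  Since each q_i is a priori bounded through
   the damping -psi_i q_i, choosing lambda_i below a multiple of the inverse of
   that bound keeps the drift of every q_i above a positive constant up to a
   time large enough for all q_i to become positive.  Finally the open positive
   orthant is forward invariant for any lambda > 0: if q_i reaches 0 while the
   other agents favour D, its neighbours pay at least as well as a coin flip
   and the drift of q_i is positive. *)
From Stdlib Require Import Reals Lra Lia Relations Classical.
From Coquelicot Require Import Coquelicot.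
Open Scope R_scope.

(** * Finite sums *)

Lemma sumR_nonneg n f : (forall j, (j < n)%nat -> 0 <= f j) -> 0 <= sumR n f.
Proof.
  induction n as [|n IH]; simpl; intros Hf; [lra|].
  assert (0 <= sumR n f) by (apply IH; intros; apply Hf; lia).
  assert (0 <= f n) by (apply Hf; lia).
  lra.
Qed.

Lemma sumR_ge_term n f k :
  (forall j, (j < n)%nat -> 0 <= f j) -> (k < n)%nat -> f k <= sumR n f.
Proof.
  induction n as [|n IH]; simpl; intros Hf Hk; [lia|].
  destruct (Nat.eq_dec k n) as [->|Hne].
  - assert (0 <= sumR n f) by (apply sumR_nonneg; intros; apply Hf; lia). lra.
  - assert (f k <= sumR n f) by (apply IH; [intros; apply Hf|]; lia).
    assert (0 <= f n) by (apply Hf; lia). lra.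
Qed.

Lemma sumR_abs_le n f K :
  (forall j, (j < n)%nat -> Rabs (f j) <= K) -> Rabs (sumR n f) <= INR n * K.
Proof.
  induction n as [|n IH]; simpl sumR; intros Hf.
  - rewrite Rabs_R0. simpl. lra.
  - assert (Rabs (sumR n f) <= INR n * K) by (apply IH; intros; apply Hf; lia).
    assert (Rabs (f n) <= K) by (apply Hf; lia).
    pose proof (Rabs_triang (sumR n f) (f n)).
    rewrite S_INR. lra.
Qed.

Lemma nbsum_lin n G i a b f g :
  nbsum n G i (fun j => a * f j - b * g j) = a * nbsum n G i f - b * nbsum n G i g.
Proof.
  unfold nbsum. induction n as [|n IH]; simpl; [ring|].
  rewrite IH. destruct (G i n); ring.
Qed.

Lemma connected_neighbour n G i :
  (2 <= n)%nat -> connected n G -> (i < n)%nat -> exists k, (k < n)%nat /\ G i k = true.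
Proof.
  intros Hn Hconn Hi.
  assert (Hj : exists j, (j < n)%nat /\ j <> i).
  { exists (if Nat.eq_dec i 0 then 1%nat else 0%nat). destruct (Nat.eq_dec i 0); lia. }
  destruct Hj as [j [Hj Hji]].
  pose proof (clos_rt_rt1n _ _ _ _ (Hconn i j Hi Hj)) as Hpath.
  inversion Hpath as [| k ? [_ [Hk HGk]] _]; [lia | exists k; auto].
Qed.

Lemma nbsum_ge n G i f a :
  (2 <= n)%nat -> connected n G -> (i < n)%nat -> 0 <= a ->
  (forall j, (j < n)%nat -> G i j = true -> a <= f j) -> a <= nbsum n G i f.
Proof.
  intros Hn Hconn Hi Ha Hf.
  destruct (connected_neighbour n G i Hn Hconn Hi) as [k [Hk HGk]].
  set (F := fun j => if G i j then f j else 0).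
  assert (HF : forall j, (j < n)%nat -> 0 <= F j).
  { intros j Hj. unfold F. destruct (G i j) eqn:E; [pose proof (Hf j Hj E)|]; lra. }
  pose proof (sumR_ge_term n F k HF Hk) as Hsum.
  unfold F in Hsum at 1. rewrite HGk in Hsum. pose proof (Hf k Hk HGk).
  unfold nbsum. fold F. lra.
Qed.

Lemma nbsum_abs_le n G i f K :
  0 <= K -> (forall j, (j < n)%nat -> Rabs (f j) <= K) ->
  Rabs (nbsum n G i f) <= INR n * K.
Proof.
  intros HK Hf. apply sumR_abs_le. intros j Hj.
  destruct (G i j); [auto | rewrite Rabs_R0; lra].
Qed.

(** * Logit choice and the pairwise drift *)

Lemma prob_bounds l q : 0 < prob l q < 1.
Proof.
  unfold prob. pose proof (exp_pos (- (l * q))).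
  split; [apply Rdiv_lt_0_compat; lra|].
  apply (Rmult_lt_reg_r (1 + exp (- (l * q)))); [lra|].
  field_simplify; lra.
Qed.

Lemma prob_half_dev l q :
  prob l q - 1 / 2 = (1 - exp (- (l * q))) / (2 * (1 + exp (- (l * q)))).
Proof. unfold prob. pose proof (exp_pos (- (l * q))). field. lra. Qed.

Lemma prob_zero l : prob l 0 = 1 / 2.
Proof. unfold prob. rewrite Rmult_0_r, Ropp_0, exp_0. field. Qed.

Lemma prob_ge_half l q : 0 <= l * q -> 1 / 2 <= prob l q.
Proof.
  intros Hlq. enough (0 <= prob l q - 1 / 2) by lra.
  rewrite prob_half_dev.
  assert (Hu : exp (- (l * q)) <= 1).
  { destruct (Rle_lt_or_eq_dec 0 (l * q) Hlq) as [Hpos | <-].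
    - rewrite <- exp_0. left. apply exp_increasing. lra.
    - rewrite Ropp_0, exp_0. lra. }
  pose proof (exp_pos (- (l * q))).
  apply Rdiv_le_0_compat; lra.
Qed.

Lemma prob_near_half l q rho :
  rho <= 1 / 2 -> Rabs (l * q) <= rho -> Rabs (prob l q - 1 / 2) <= rho.
Proof.
  intros Hrho Hlq. apply Rabs_le_between in Hlq.
  rewrite prob_half_dev.
  set (u := exp (- (l * q))).
  assert (Hu0 : 0 < u) by apply exp_pos.
  assert (Hulow : 1 - rho <= u) by (pose proof (exp_ineq1_le (- (l * q))); unfold u; lra).
  assert (Huup : u <= 1 + 2 * rho).
  { assert (Hprod : u * exp (l * q) = 1).
    { unfold u. rewrite <- exp_plus. replace (- (l * q) + l * q) with 0 by ring. apply exp_0. }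
    pose proof (exp_ineq1_le (l * q)). nra. }
  set (k := (1 - u) / (2 * (1 + u))).
  assert (Hk : k * (2 * (1 + u)) = 1 - u) by (unfold k; field; lra).
  apply Rabs_le. split; nra.
Qed.

Definition edge_drift (x y z w e p r : R) : R :=
  (p + e * (1 - p)) * (r * w + (1 - r) * x) - (1 - p + e * p) * (r * y + (1 - r) * z).

Definition payoff_bound (x y z w : R) : R := Rabs w + Rabs x + Rabs y + Rabs z.

Lemma Rabs_bounds a : - Rabs a <= a <= Rabs a.
Proof. apply Rabs_le_between, Rle_refl. Qed.

Lemma Rmult_abs_le a b A B : Rabs a <= A -> Rabs b <= B -> Rabs (a * b) <= A * B.
Proof.
  intros Ha Hb. rewrite Rabs_mult.
  apply Rmult_le_compat; auto using Rabs_pos.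
Qed.

Section PairwiseDrift.

Variables x y z w : R.

Let K := payoff_bound x y z w.

Let payoff_bounds : - K <= w - x - y + z <= K /\ - K <= w + x + y + z <= K /\
  - K <= w - x + y - z <= K.
Proof.
  unfold K, payoff_bound.
  pose proof (Rabs_bounds w). pose proof (Rabs_bounds x).
  pose proof (Rabs_bounds y). pose proof (Rabs_bounds z). lra.
Qed.

Lemma edge_drift_abs_le e p r :
  0 <= e <= 1 -> 0 <= p <= 1 -> 0 <= r <= 1 -> Rabs (edge_drift x y z w e p r) <= K.
Proof.
  intros He Hp Hr. unfold edge_drift.
  set (P := p + e * (1 - p)). set (Q := 1 - p + e * p).
  assert (0 <= P <= 1) by (unfold P; nra). assert (0 <= Q <= 1) by (unfold Q; nra).
  pose proof (Rabs_bounds w). pose proof (Rabs_bounds x).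
  pose proof (Rabs_bounds y). pose proof (Rabs_bounds z).
  assert (- (Rabs w + Rabs x) <= r * w + (1 - r) * x <= Rabs w + Rabs x) by nra.
  assert (- (Rabs y + Rabs z) <= r * y + (1 - r) * z <= Rabs y + Rabs z) by nra.
  apply Rabs_le. unfold K, payoff_bound. split; nra.
Qed.

Lemma edge_drift_half_expansion e p r :
  edge_drift x y z w e p r =
  (1 + e) / 4 * (w + x - y - z) + ((1 + e) / 2 * (r - 1 / 2)) * (w - x - y + z)
  + (p - 1 / 2) * ((1 - e) * ((w + x + y + z) / 2 + (r - 1 / 2) * (w - x + y - z))).
Proof. unfold edge_drift. field. Qed.

Lemma edge_drift_near_half e p r rho :
  z + y <= w + x -> 0 <= e <= 1 -> rho <= 1 / 2 ->
  Rabs (p - 1 / 2) <= rho -> Rabs (r - 1 / 2) <= rho ->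
  (w + x - y - z) / 4 - 2 * rho * K <= edge_drift x y z w e p r.
Proof.
  intros Hrd He Hrho Hp Hr.
  destruct payoff_bounds as (Hcross & Hsum & Hdiff).
  assert (Hcoef : Rabs ((1 + e) / 2 * (r - 1 / 2)) <= rho * 1).
  { rewrite Rmult_comm. apply Rmult_abs_le; [auto | apply Rabs_le; lra]. }
  assert (Hmix : Rabs ((1 - e) * ((w + x + y + z) / 2 + (r - 1 / 2) * (w - x + y - z))) <= 1 * K).
  { apply Rmult_abs_le; [apply Rabs_le; lra|].
    pose proof (Rmult_abs_le (r - 1 / 2) (w - x + y - z) (1 / 2) K
      ltac:(lra) ltac:(apply Rabs_le; lra)) as Hslope.
    apply Rabs_le. apply Rabs_le_between in Hslope. lra. }
  pose proof (Rmult_abs_le _ _ _ _ Hcoef (proj2 (Rabs_le_between _ K) Hcross)) as H1.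
  pose proof (Rmult_abs_le _ _ _ _ Hp Hmix) as H2.
  apply Rabs_le_between in H1. apply Rabs_le_between in H2.
  rewrite edge_drift_half_expansion. nra.
Qed.

Lemma edge_drift_ge_at_half e r :
  y <= w -> x <= z -> z + y <= w + x -> 0 <= e <= 1 -> 1 / 2 <= r ->
  (w + x - y - z) / 4 <= edge_drift x y z w e (1 / 2) r.
Proof.
  intros Hyw Hxz Hrd He Hr.
  rewrite edge_drift_half_expansion, Rminus_diag, Rmult_0_l, Rplus_0_r.
  assert (0 <= (1 + e) / 2 * (r - 1 / 2)) by (apply Rmult_le_pos; lra).
  assert (0 <= (1 + e) / 2 * (r - 1 / 2) * (w - x - y + z)) by (apply Rmult_le_pos; lra).
  nra.
Qed.

End PairwiseDrift.

(** * Sign arguments for differentiable functions *)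

Lemma is_derive_sign_persist (f : R -> R) (c l : R) :
  is_derive f c l -> 0 < f c -> exists d, 0 < d /\ forall t, Rabs (t - c) < d -> 0 < f t.
Proof.
  intros Hd Hpos.
  assert (Hc : continuous f c)
    by (apply (ex_derive_continuous (K := R_AbsRing) (V := R_NormedModule)); exists l; exact Hd).
  unfold continuous in Hc. rewrite filterlim_locally in Hc.
  destruct (Hc (mkposreal _ Hpos)) as [d Hclose].
  exists d. split; [apply cond_pos|]. intros t Ht.
  assert (Hdist : Rabs (f t - f c) < f c) by exact (Hclose t Ht).
  apply Rabs_lt_between in Hdist. lra.
Qed.

Lemma all_pos_persist n (q : R -> nat -> R) (D : R -> nat -> R) c :
  (forall i, (i < n)%nat -> is_derive (fun s => q s i) c (D c i)) ->
  (forall i, (i < n)%nat -> 0 < q c i) ->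
  exists d, 0 < d /\ forall t, Rabs (t - c) < d -> forall i, (i < n)%nat -> 0 < q t i.
Proof.
  induction n as [|n IH]; intros Hd Hpos.
  - exists 1. split; [lra | intros; lia].
  - destruct IH as [d1 [Hd1 Hnear1]]; [intros; apply Hd; lia | intros; apply Hpos; lia|].
    destruct (is_derive_sign_persist _ _ _ (Hd n ltac:(lia)) (Hpos n ltac:(lia)))
      as [d2 [Hd2 Hnear2]].
    exists (Rmin d1 d2). split; [apply Rmin_pos; lra|].
    intros t Ht i Hi. pose proof (Rmin_l d1 d2). pose proof (Rmin_r d1 d2).
    destruct (Nat.eq_dec i n) as [->|Hne]; [apply Hnear2 | apply Hnear1]; lra || lia.
Qed.

Lemma is_derive_pos_left (f : R -> R) c l a :
  is_derive f c l -> 0 < l -> a < c -> exists t, a <= t < c /\ f t < f c.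
Proof.
  intros Hd Hl Ha. apply is_derive_Reals in Hd.
  destruct (Hd l Hl) as [delta Hdelta].
  set (h := - Rmin delta (c - a) / 2).
  pose proof (Rmin_l delta (c - a)). pose proof (Rmin_r delta (c - a)).
  assert (0 < Rmin delta (c - a)) by (apply Rmin_pos; [apply cond_pos | lra]).
  assert (Hh : h < 0) by (unfold h; lra).
  assert (Hsmall : Rabs h < delta) by (rewrite Rabs_left by lra; unfold h; lra).
  specialize (Hdelta h ltac:(lra) Hsmall). apply Rabs_lt_between in Hdelta.
  exists (c + h). split; [unfold h; lra|].
  assert (Hquot : 0 < (f (c + h) - f c) / h) by lra.
  assert (f (c + h) - f c = (f (c + h) - f c) / h * h) by (field; lra).
  nra.
Qed.

Section PositiveOnLeft.

Variables (f : R -> R) (a c l : R).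
Hypotheses (Hac : a < c) (Hbefore : forall u, a <= u < c -> 0 < f u) (Hd : is_derive f c l).

Lemma pos_on_left_ge0 : 0 <= f c.
Proof.
  apply Rnot_lt_le. intros Hneg.
  destruct (is_derive_sign_persist (fun s => - f s) c (- l) (is_derive_opp f c l Hd)
    ltac:(lra)) as [d [Hd0 Hnear]].
  set (u := c - Rmin d (c - a) / 2).
  pose proof (Rmin_l d (c - a)). pose proof (Rmin_r d (c - a)).
  assert (0 < Rmin d (c - a)) by (apply Rmin_pos; lra).
  assert (Rabs (u - c) < d) by (unfold u; rewrite Rabs_left by lra; lra).
  specialize (Hnear u ltac:(assumption)). simpl in Hnear.
  assert (0 < f u) by (apply Hbefore; unfold u; lra). lra.
Qed.

Lemma pos_on_left_zero_derive_le0 : f c = 0 -> l <= 0.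
Proof.
  intros Hzero. apply Rnot_lt_le. intros Hl.
  destruct (is_derive_pos_left f c l a Hd Hl Hac) as [t [Ht Hlt]].
  pose proof (Hbefore t Ht). lra.
Qed.

End PositiveOnLeft.

Lemma first_failure (P : R -> Prop) a b :
  a <= b -> P a -> ~ P b ->
  (forall c, a <= c <= b -> P c -> exists d, 0 < d /\ forall t, Rabs (t - c) < d -> P t) ->
  exists c, a < c <= b /\ (forall u, a <= u < c -> P u) /\ ~ P c.
Proof.
  intros Hab Ha Hb Hopen.
  set (E := fun t => a <= t <= b /\ forall u, a <= u <= t -> P u).
  assert (HEa : E a) by (split; [lra | intros u Hu; replace u with a by lra; exact Ha]).
  assert (Hbound : bound E) by (exists b; intros t [Ht _]; lra).
  destruct (completeness E Hbound (ex_intro _ a HEa)) as [c [Hub Hlub]].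
  assert (Hac : a <= c) by (apply Hub; exact HEa).
  assert (Hcb : c <= b) by (apply Hlub; intros t [Ht _]; lra).
  assert (Hbefore : forall u, a <= u < c -> P u).
  { intros u Hu. destruct (classic (exists t, E t /\ u < t)) as [[t [[_ Ht] Hut]] | Hnone].
    - apply Ht. lra.
    - assert (c <= u); [|lra].
      apply Hlub. intros t Et. apply Rnot_lt_le. intros Hut. apply Hnone. eauto. }
  assert (Hfail : ~ P c).
  { intros Hc. destruct (Req_dec c b) as [-> | Hcb']; [contradiction|].
    destruct (Hopen c ltac:(lra) Hc) as [d [Hd Hnear]].
    pose proof (Rmin_l b (c + d / 2)). pose proof (Rmin_r b (c + d / 2)).
    set (v := Rmin b (c + d / 2)) in *.
    assert (c < v) by (apply Rmin_glb_lt; lra).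
    assert (E v).
    { split; [lra|]. intros u Hu. destruct (Rlt_le_dec u c).
      - apply Hbefore. lra.
      - apply Hnear. rewrite Rabs_right; lra. }
    assert (v <= c) by (apply Hub; assumption). lra. }
  exists c. split; [|auto].
  destruct (Req_dec a c) as [<- | Hne]; [contradiction | lra].
Qed.

Lemma positive_orthant_invariant n (q D : R -> nat -> R) t1 :
  0 < t1 -> (forall i, (i < n)%nat -> 0 < q t1 i) ->
  (forall t i, (i < n)%nat -> 0 < t -> is_derive (fun s => q s i) t (D t i)) ->
  (forall t i, 0 < t -> (i < n)%nat -> q t i = 0 ->
     (forall j, (j < n)%nat -> 0 <= q t j) -> 0 < D t i) ->
  forall t i, t1 <= t -> (i < n)%nat -> 0 < q t i.
Proof.
  intros Ht1 Hq1 Hder Hboundary t2 i0 Ht2 Hi0.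
  apply Rnot_le_lt. intros Hneg.
  destruct (first_failure (fun t => forall i, (i < n)%nat -> 0 < q t i) t1 t2)
    as [c [Hc [Hbefore Hfail]]]; auto.
  { intros Hall. specialize (Hall i0 Hi0). lra. }
  { intros c Hc. apply (all_pos_persist n q D c). intros i Hi. apply Hder; auto. lra. }
  assert (Hderc : forall i, (i < n)%nat -> is_derive (fun s => q s i) c (D c i))
    by (intros i Hi; apply Hder; [auto | lra]).
  assert (Hnonneg : forall j, (j < n)%nat -> 0 <= q c j).
  { intros j Hj. apply (pos_on_left_ge0 (fun s => q s j) t1 c (D c j));
    [lra | auto..]. }
  destruct (not_all_ex_not _ _ Hfail) as [i Hi].
  apply imply_to_and in Hi. destruct Hi as [Hi Hnpos].
  assert (Hzero : q c i = 0) by (pose proof (Hnonneg i Hi); lra).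
  pose proof (Hboundary c i ltac:(lra) Hi Hzero Hnonneg).
  assert (D c i <= 0); [|lra].
  apply (pos_on_left_zero_derive_le0 (fun s => q s i) t1 c); [lra | auto..].
Qed.

(** * Linear differential inequalities *)

Lemma nonpos_derive_antitone (h dh : R -> R) a b :
  a <= b -> (forall u, a <= u <= b -> is_derive h u (dh u)) ->
  (forall u, a <= u <= b -> dh u <= 0) -> h b <= h a.
Proof.
  intros Hab Hd Hneg.
  destruct (MVT_gen h a b dh) as [c [Hc Hmvt]];
    rewrite ?Rmin_left, ?Rmax_right in * by lra.
  - intros u Hu. apply Hd. lra.
  - intros u Hu. apply derivable_continuous_pt. exists (dh u).
    apply is_derive_Reals, Hd. lra.
  - pose proof (Hneg c Hc). nra.
Qed.

Lemma gronwall_upper (f df : R -> R) c C s t :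
  0 < c -> s <= t -> (forall u, s <= u <= t -> is_derive f u (df u)) ->
  (forall u, s <= u <= t -> df u <= - c * f u + C) ->
  (f t - C / c) * exp (c * (t - s)) <= f s - C / c.
Proof.
  intros Hc Hst Hd Hdrift.
  set (h := fun u => (f u - C / c) * exp (c * (u - s))).
  assert (Hh : h t <= h s).
  { apply (nonpos_derive_antitone h
      (fun u => (df u + c * (f u - C / c)) * exp (c * (u - s)))); auto.
    - intros u Hu.
      assert (Hshift : is_derive (fun v => f v - C / c) u (df u)).
      { replace (df u) with (minus (df u) 0) by (unfold minus, plus, opp; simpl; ring).
        apply (is_derive_minus f (fun _ => C / c) u (df u) 0);
          [apply Hd; lra | apply (is_derive_const (C / c))]. }
      assert (Hexp : is_derive (fun v => exp (c * (v - s))) u (c * exp (c * (u - s))))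
        by (auto_derive; [auto | unfold Rminus; ring]).
      replace ((df u + c * (f u - C / c)) * exp (c * (u - s)))
        with (df u * exp (c * (u - s)) + (f u - C / c) * (c * exp (c * (u - s)))) by ring.
      exact (Derive.is_derive_mult _ _ _ _ _ Hshift Hexp).
    - intros u Hu. pose proof (Hdrift u Hu). pose proof (exp_pos (c * (u - s))).
      assert (df u + c * (f u - C / c) <= 0) by (field_simplify; lra).
      nra. }
  unfold h in Hh. rewrite Rminus_diag, Rmult_0_r, exp_0, Rmult_1_r in Hh. exact Hh.
Qed.

Lemma linear_drift_barrier (f df : R -> R) c C B s t :
  0 < c -> s <= t -> (forall u, s <= u <= t -> is_derive f u (df u)) ->
  (forall u, s <= u <= t -> df u <= - c * f u + C) ->
  f s <= B -> C / c <= B -> f t <= B.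
Proof.
  intros Hc Hst Hd Hdrift Hs HB.
  pose proof (gronwall_upper f df c C s t Hc Hst Hd Hdrift) as Hgr.
  pose proof (exp_ineq1_le (c * (t - s))).
  apply Rnot_lt_le. intros Hlt.
  assert (Hgrow : (f t - C / c) * 1 <= (f t - C / c) * exp (c * (t - s)))
    by (apply Rmult_le_compat_l; nra).
  lra.
Qed.

Lemma linear_drift_escape (f df : R -> R) c g s t :
  0 < c -> 0 < g -> s <= t -> (forall u, s <= u <= t -> is_derive f u (df u)) ->
  (forall u, s <= u <= t -> - c * f u + g <= df u) ->
  - f s < g * (t - s) -> 0 < f t.
Proof.
  intros Hc Hg Hst Hd Hdrift Hs.
  pose proof (gronwall_upper (fun u => - f u) (fun u => - df u) c (- g) s t Hc Hst
    (fun u Hu => is_derive_opp f u (df u) (Hd u Hu))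
    (fun u Hu => ltac:(pose proof (Hdrift u Hu); lra))) as Hgr.
  simpl in Hgr.
  pose proof (exp_ineq1_le (c * (t - s))).
  apply Rnot_le_lt. intros Hnonpos.
  assert (Hgc : - g / c = - (g / c)) by (field; lra).
  assert (Hgc_pos : 0 < g / c) by (apply Rdiv_lt_0_compat; lra).
  rewrite Hgc in Hgr.
  assert (Hgrow : (- f t + g / c) * (1 + c * (t - s)) <= (- f t + g / c) * exp (c * (t - s)))
    by (apply Rmult_le_compat_l; lra).
  assert (0 <= - f t * (1 + c * (t - s))) by (apply Rmult_le_pos; nra).
  assert (g / c * (1 + c * (t - s)) = g / c + g * (t - s)) by (field; lra).
  lra.
Qed.

Lemma at_right_close (f : R -> R) f0 eps :
  filterlim f (at_right 0) (locally f0) -> 0 < eps ->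
  exists d, 0 < d /\ forall s, 0 < s < d -> Rabs (f s - f0) < eps.
Proof.
  intros Hlim Heps. rewrite filterlim_locally in Hlim.
  destruct (Hlim (mkposreal _ Heps)) as [d Hclose].
  exists d. split; [apply cond_pos|]. intros s Hs.
  apply (Hclose s); [|lra].
  change (Rabs (s - 0) < d). rewrite Rminus_0_r, Rabs_pos_eq; lra.
Qed.

Section RightLimit.

Variables (f df : R -> R) (f0 c : R).
Hypotheses (Hc : 0 < c) (Hlim : filterlim f (at_right 0) (locally f0)).

Lemma linear_drift_bounded C :
  (forall t, 0 < t -> is_derive f t (df t)) ->
  (forall t, 0 < t -> Rabs (df t + c * f t) <= C) ->
  forall t, 0 < t -> Rabs (f t) <= Rabs f0 + 1 + C / c.
Proof.
  intros Hd Hdrift t Ht.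
  destruct (at_right_close f f0 1 Hlim Rlt_0_1) as [d [Hd0 Hclose]].
  pose proof (Rabs_bounds f0).
  assert (HC : 0 <= C / c).
  { apply Rdiv_le_0_compat; [|lra]. pose proof (Hdrift 1 Rlt_0_1).
    pose proof (Rabs_pos (df 1 + c * f 1)). lra. }
  destruct (Rlt_le_dec t d) as [Htd | Htd].
  - specialize (Hclose t (conj Ht Htd)). apply Rabs_lt_between in Hclose.
    apply Rabs_le. lra.
  - specialize (Hclose (d / 2) ltac:(lra)). apply Rabs_lt_between in Hclose.
    assert (Hdrift' : forall u, d / 2 <= u <= t ->
      - c * f u - C <= df u <= - c * f u + C).
    { intros u Hu. pose proof (Hdrift u ltac:(lra)) as Hu'. apply Rabs_le_between in Hu'.
      lra. }
    apply Rabs_le. split.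
    + enough (- f t <= Rabs f0 + 1 + C / c) by lra.
      apply (linear_drift_barrier (fun u => - f u) (fun u => - df u) c C _ (d / 2) t);
        [lra | lra | | | simpl; lra | lra].
      * intros u Hu. apply (is_derive_opp f u (df u)), Hd. lra.
      * intros u Hu. pose proof (Hdrift' u Hu). lra.
    + apply (linear_drift_barrier f df c C _ (d / 2) t); [lra | lra | | | lra | lra].
      * intros u Hu. apply Hd. lra.
      * intros u Hu. pose proof (Hdrift' u Hu). lra.
Qed.

Lemma linear_drift_positive g T :
  0 < g -> (forall t, 0 < t < T -> is_derive f t (df t)) ->
  (forall t, 0 < t < T -> - c * f t + g <= df t) ->
  forall t, 1 + (Rabs f0 + 1) / g <= t < T -> 0 < f t.
Proof.
  intros Hg Hd Hdrift t Ht.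
  destruct (at_right_close f f0 1 Hlim Rlt_0_1) as [d [Hd0 Hclose]].
  pose proof (Rmin_l (d / 2) 1). pose proof (Rmin_r (d / 2) 1).
  assert (0 < Rmin (d / 2) 1) by (apply Rmin_pos; lra).
  set (s := Rmin (d / 2) 1) in *.
  specialize (Hclose s ltac:(lra)). apply Rabs_lt_between in Hclose.
  pose proof (Rabs_bounds f0).
  assert (Hquot : 0 <= (Rabs f0 + 1) / g)
    by (apply Rdiv_le_0_compat; [pose proof (Rabs_pos f0) |]; lra).
  apply (linear_drift_escape f df c g s t); auto; try lra.
  - intros u Hu. apply Hd. lra.
  - intros u Hu. apply Hdrift. lra.
  - assert (g * ((Rabs f0 + 1) / g) = Rabs f0 + 1) by (field; lra).
    assert (g * (t - s) >= g * ((Rabs f0 + 1) / g)) by (apply Rle_ge, Rmult_le_compat_l; lra).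
    lra.
Qed.

End RightLimit.

(** * The network dynamics *)

(* At p = r = 1/2 a neighbour contributes at least (w + x - y - z)/4; half of
   that is reserved for the deviation of the probabilities from 1/2. *)
Definition drift_margin (x y z w : R) : R := (w + x - y - z) / 8.

Definition near_half_radius (x y z w : R) : R :=
  Rmin (1 / 2) (drift_margin x y z w / (2 * payoff_bound x y z w)).

Section Network.

Variables (n : nat) (G : nat -> nat -> bool) (x y z w : R) (psi eta : nat -> R).
Hypotheses (Hn : (2 <= n)%nat) (Hconn : connected n G)
  (Hzw : z > w) (Hwx : w > x) (Hxy : x > y) (Hrd : w + x > z + y)
  (Hpsi : forall i, (i < n)%nat -> psi i > 0)
  (Heta : forall i, (i < n)%nat -> 0 <= eta i <= 1).

Let K := payoff_bound x y z w.
Let g := drift_margin x y z w.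
Let rho := near_half_radius x y z w.

Lemma payoff_bound_pos : 0 < K.
Proof.
  unfold K, payoff_bound.
  pose proof (Rabs_bounds w). pose proof (Rabs_bounds y).
  pose proof (Rabs_pos x). pose proof (Rabs_pos z). lra.
Qed.

Lemma drift_margin_pos : 0 < g.
Proof. unfold g, drift_margin. lra. Qed.

Lemma near_half_radius_pos : 0 < rho.
Proof.
  pose proof payoff_bound_pos. pose proof drift_margin_pos.
  unfold rho, near_half_radius. fold K g.
  apply Rmin_pos; [lra | apply Rdiv_lt_0_compat; lra].
Qed.

Lemma near_half_radius_le_half : rho <= 1 / 2.
Proof. apply Rmin_l. Qed.

Lemma near_half_radius_margin : 2 * rho * K <= g.
Proof.
  pose proof payoff_bound_pos. pose proof near_half_radius_pos.
  pose proof (Rmin_r (1 / 2) (g / (2 * K))).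
  assert (g / (2 * K) * (2 * K) = g) by (field; lra).
  unfold rho, near_half_radius in *. fold K g. nra.
Qed.

Section Rhs.

Variables (lam : nat -> R -> R) (t : R) (q : nat -> R) (i : nat).
Hypothesis (Hi : (i < n)%nat).

Let drift := rhs n G x y z w psi eta lam t q i.

Lemma rhs_edge_drift :
  drift = - psi i * q i + nbsum n G i (fun j =>
    edge_drift x y z w (eta i) (prob (lam i t) (q i)) (prob (lam j t) (q j))).
Proof. unfold drift, rhs, edge_drift. rewrite nbsum_lin. ring. Qed.

Lemma rhs_damped_bound : Rabs (drift + psi i * q i) <= INR n * K.
Proof.
  rewrite rhs_edge_drift. replace (_ + psi i * q i) with (nbsum n G i (fun j =>
    edge_drift x y z w (eta i) (prob (lam i t) (q i)) (prob (lam j t) (q j)))) by ring.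
  apply nbsum_abs_le; [pose proof payoff_bound_pos; lra|]. intros j Hj.
  pose proof (prob_bounds (lam i t) (q i)). pose proof (prob_bounds (lam j t) (q j)).
  apply edge_drift_abs_le; auto; lra.
Qed.

Lemma rhs_ge_near_half :
  (forall j, (j < n)%nat -> Rabs (prob (lam j t) (q j) - 1 / 2) <= rho) ->
  - psi i * q i + g <= drift.
Proof.
  intros Hnear. pose proof near_half_radius_le_half. pose proof near_half_radius_margin.
  rewrite rhs_edge_drift. apply Rplus_le_compat_l.
  apply nbsum_ge; auto; [pose proof drift_margin_pos; lra|]. intros j Hj _.
  pose proof (edge_drift_near_half x y z w (eta i) (prob (lam i t) (q i))
    (prob (lam j t) (q j)) rho ltac:(lra) (Heta i Hi) ltac:(assumption)
    (Hnear i Hi) (Hnear j Hj)).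
  unfold g, drift_margin, K in *. lra.
Qed.

Lemma rhs_pos_on_boundary :
  (forall j, (j < n)%nat -> 0 < lam j t) -> q i = 0 ->
  (forall j, (j < n)%nat -> 0 <= q j) -> 0 < drift.
Proof.
  intros Hlam Hzero Hnonneg. pose proof drift_margin_pos.
  rewrite rhs_edge_drift, Hzero, prob_zero, Rmult_0_r, Rplus_0_l.
  apply Rlt_le_trans with (2 * g); [lra|].
  apply nbsum_ge; auto; [lra|]. intros j Hj _.
  unfold g, drift_margin.
  replace (2 * ((w + x - y - z) / 8)) with ((w + x - y - z) / 4) by field.
  apply edge_drift_ge_at_half; auto; try lra.
  apply prob_ge_half. pose proof (Hlam j Hj). pose proof (Hnonneg j Hj). nra.
Qed.

End Rhs.

Definition damped_bound (q0 : nat -> R) (i : nat) : R :=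
  Rabs (q0 i) + 1 + INR n * K / psi i.

(* Shortly after time 0, q_i > -(|q0 i| + 1); a drift of at least g then makes
   q_i positive within time (|q0 i| + 1) / g. *)
Definition escape_time (q0 : nat -> R) : R :=
  1 + sumR n (fun i => (Rabs (q0 i) + 1) / g).

Lemma damped_bound_pos q0 i : (i < n)%nat -> 0 < damped_bound q0 i.
Proof.
  intros Hi. unfold damped_bound. pose proof (Rabs_pos (q0 i)).
  assert (0 <= INR n * K / psi i); [|lra].
  pose proof (pos_INR n). pose proof payoff_bound_pos. pose proof (Hpsi i Hi).
  apply Rdiv_le_0_compat; [apply Rmult_le_pos|]; lra.
Qed.

Lemma escape_time_ge q0 i : (i < n)%nat -> 1 + (Rabs (q0 i) + 1) / g <= escape_time q0.
Proof.
  intros Hi. unfold escape_time. apply Rplus_le_compat_l.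
  apply (sumR_ge_term n (fun i => (Rabs (q0 i) + 1) / g)); auto.
  intros j _. pose proof (Rabs_pos (q0 j)). pose proof drift_margin_pos.
  apply Rdiv_le_0_compat; lra.
Qed.

Lemma one_le_escape_time q0 : 1 <= escape_time q0.
Proof.
  unfold escape_time. enough (0 <= sumR n (fun i => (Rabs (q0 i) + 1) / g)) by lra.
  apply sumR_nonneg. intros j _. pose proof (Rabs_pos (q0 j)). pose proof drift_margin_pos.
  apply Rdiv_le_0_compat; lra.
Qed.

Section Solution.

Variables (q0 : nat -> R) (lam : nat -> R -> R) (q : R -> nat -> R).
Hypotheses (Hlam : forall i t, (i < n)%nat -> 0 <= t -> lam i t > 0)
  (Hsol : is_solution n G x y z w psi eta lam q0 q).

Let drift t i := rhs n G x y z w psi eta lam t (q t) i.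

Let Hlim : forall i, (i < n)%nat -> filterlim (fun s => q s i) (at_right 0) (locally (q0 i)).
Proof. exact (proj1 (proj2 Hsol)). Qed.

Let Hder : forall i t, (i < n)%nat -> 0 < t -> is_derive (fun s => q s i) t (drift t i).
Proof. exact (proj2 (proj2 Hsol)). Qed.

Lemma solution_bounded t j : 0 < t -> (j < n)%nat -> Rabs (q t j) <= damped_bound q0 j.
Proof.
  intros Ht Hj. unfold damped_bound.
  apply (linear_drift_bounded (fun s => q s j) (fun s => drift s j) (q0 j) (psi j)
    (Hpsi j Hj) (Hlim j Hj)); [| |exact Ht].
  - intros s Hs. exact (Hder j s Hj Hs).
  - intros s Hs. exact (rhs_damped_bound lam s (q s) j Hj).
Qed.

Lemma solution_near_half T :
  (forall j t, (j < n)%nat -> 0 <= t < T -> lam j t < rho / damped_bound q0 j) ->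
  forall t j, 0 < t < T -> (j < n)%nat -> Rabs (prob (lam j t) (q t j) - 1 / 2) <= rho.
Proof.
  intros Hlow t j Ht Hj. pose proof near_half_radius_pos.
  apply prob_near_half; [apply near_half_radius_le_half|].
  pose proof (Hlam j t Hj ltac:(lra)). pose proof (Hlow j t Hj ltac:(lra)).
  pose proof (solution_bounded t j ltac:(lra) Hj). pose proof (damped_bound_pos q0 j Hj).
  rewrite Rabs_mult, (Rabs_pos_eq (lam j t)) by lra.
  replace rho with (rho / damped_bound q0 j * damped_bound q0 j) by (field; lra).
  apply Rmult_le_compat; auto using Rabs_pos; lra.
Qed.

Lemma solution_positive_at_escape T :
  escape_time q0 < T ->
  (forall j t, (j < n)%nat -> 0 <= t < T -> lam j t < rho / damped_bound q0 j) ->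
  forall i, (i < n)%nat -> 0 < q (escape_time q0) i.
Proof.
  intros HT Hlow i Hi. pose proof (escape_time_ge q0 i Hi).
  apply (linear_drift_positive (fun s => q s i) (fun s => drift s i) (q0 i) (psi i)
    (Hpsi i Hi) (Hlim i Hi) g T drift_margin_pos); [| |lra].
  - intros s Hs. apply (Hder i s Hi). lra.
  - intros s Hs. apply rhs_ge_near_half; auto.
    intros j Hj. apply (solution_near_half T); auto.
Qed.

Lemma solution_stays_positive t1 :
  0 < t1 -> (forall i, (i < n)%nat -> 0 < q t1 i) ->
  forall t i, t1 <= t -> (i < n)%nat -> 0 < q t i.
Proof.
  intros Ht1 Hq1. apply (positive_orthant_invariant n q drift t1); auto.
  intros t i Ht Hi Hzero Hnonneg. apply rhs_pos_on_boundary; auto.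
  intros j Hj. apply Hlam; [auto | lra].
Qed.

End Solution.

End Network.

Theorem corollary4 (n : nat) (G : nat -> nat -> bool) (x y z w : R)
  (psi eta : nat -> R)
  (Hn : (2 <= n)%nat)
  (HG : simple_graph n G) (Hconn : connected n G)
  (Hzw : z > w) (Hwx : w > x) (Hxy : x > y) (Hrd : w + x > z + y)
  (Hw : w > 0) (Hz : z > 0)
  (Hpsi : forall i, (i < n)%nat -> psi i > 0)
  (Heta : forall i, (i < n)%nat -> 0 <= eta i <= 1) :
  forall q0 : nat -> R,
  exists (lamlow : nat -> R) (Tlow : R),
    (forall i, (i < n)%nat -> lamlow i > 0) /\ Tlow > 0 /\
    forall (lam : nat -> R -> R) (q : R -> nat -> R),
      (forall i t, (i < n)%nat -> 0 <= t -> lam i t > 0) ->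
      (forall i s t, (i < n)%nat -> 0 <= s -> s <= t -> lam i s <= lam i t) ->
      (forall i M, (i < n)%nat -> exists T, forall t, t >= T -> lam i t > M) ->
      (forall i t, (i < n)%nat -> 0 <= t < Tlow -> lam i t < lamlow i) ->
      is_solution n G x y z w psi eta lam q0 q ->
      exists T, forall t i, t >= T -> (i < n)%nat -> q t i > 0.
Proof.
  intros q0. set (T1 := escape_time n x y z w q0).
  assert (HT1 : 1 <= T1) by (eapply one_le_escape_time; eauto).
  exists (fun i => near_half_radius x y z w / damped_bound n x y z w psi q0 i), (T1 + 1).
  split; [|split; [lra|]].
  - intros i Hi. apply Rdiv_lt_0_compat;
      [eapply near_half_radius_pos | eapply damped_bound_pos]; eauto.
  - intros lam q Hlam _ _ Hlow Hsol. exists T1. intros t i Ht Hi.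
    apply Rge_le in Ht.
    apply (solution_stays_positive n G x y z w psi eta) with (q0 := q0) (lam := lam) (t1 := T1);
      auto; [lra|].
    apply (solution_positive_at_escape n G x y z w psi eta) with (lam := lam) (T := T1 + 1);
      auto. unfold T1 in *. lra.
Qed.
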